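(* Let $N\ge1$, $\lambda_1,\dots,\lambda_N$ distinct real numbers, $\mu_1,\dots,\mu_N$ nonzero real constants, $A=\mathrm{diag}(\lambda_1,\dots,\lambda_N)$, $B=\mathrm{diag}(\mu_1,\dots,\mu_N)$. Define functions on $\mathbb{R}^{6N}$ by \[F_1=-8(\langle P_1,BQ_1\rangle-\langle P_3,BQ_3\rangle),\] and for $m\ge2$ \[\begin{aligned}F_m=&\,4\sum_{i=1}^{m-1}\Big[(\langle A^{i-1}P_1,BQ_1\rangle-\langle A^{i-1}P_3,BQ_3\rangle)(\langle A^{m-i-1}P_1,BQ_1\rangle-\langle A^{m-i-1}P_3,BQ_3\rangle)\\ &\quad+2(\langle A^{i-1}P_1,BQ_2\rangle+\langle A^{i-1}P_2,BQ_3\rangle)(\langle A^{m-i-1}P_2,BQ_1\rangle+\langle A^{m-i-1}P_3,BQ_2\rangle)\Big]\\ &-8(\langle A^{m-1}P_1,BQ_1\rangle-\langle A^{m-1}P_3,BQ_3\rangle).\end{aligned}\] Then every $F_m$, $m\ge1$, is an integral of motion of the nonlinearized spatial system \[ \begin{pmatrix}\phi_{1j}\\ \phi_{2j}\\ \phi_{3j}\end{pmatrix}_x=U(\tilde u,\lambda_j)\begin{pmatrix}\phi_{1j}\\ \phi_{2j}\\ \phi_{3j}\end{pmatrix},\qquad \begin{pmatrix}\psi_{1j}\\ \psi_{2j}\\ \psi_{3j}\end{pmatrix}_x=-U(\tilde u,\lambda_j)^T\begin{pmatrix}\psi_{1j}\\ \psi_{2j}\\ \psi_{3j}\end{pmatrix},\quad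 j=1,\dots,N, \] with $\tilde u=(\tilde q,\tilde r)^T$, $\tilde q=\sqrt2(\langle P_1,BQ_2\rangle+\langle P_2,BQ_3\rangle)$, $\tilde r=\sqrt2(\langle P_2,BQ_1\rangle+\langle P_3,BQ_2\rangle)$. Moreover, together with $\bar F_j=\sum_{i=1}^3\phi_{ij}\psi_{ij}$, $1\le j\le N$, they form an involutive system: \[\{F_k,F_l\}=\{F_m,\bar F_j\}=0,\qquad m,k,l\ge1,\ 1\le j\le N.\]
   Context: On $\mathbb{R}^{6N}$ with coordinates $\phi_{ij},\psi_{ij}$ ($i=1,2,3$, $j=1,\dots,N$), $P_i=(\phi_{i1},\dots,\phi_{iN})^T$, $Q_i=(\psi_{i1},\dots,\psi_{iN})^T$; $\langle\cdot,\cdot\rangle$ is the standard inner product on $\mathbb{R}^N$. For $u=(q,r)^T$, $U(u,\lambda)=\begin{pmatrix}-2\lambda&\sqrt2 q&0\\ \sqrt2 r&0&\sqrt2 q\\ 0&\sqrt2 r&2\lambda\end{pmatrix}$. The Poisson bracket is $\{F,G\}=\sum_{i=1}^3\big(\langle \tfrac{\partial F}{\partial Q_i},B^{-1}\tfrac{\partial G}{\partial P_i}\rangle-\langle \tfrac{\partial F}{\partial P_i},B^{-1}\tfrac{\partial G}{\partial Q_i}\rangle\big)$ with $\frac{\partial}{\partial P_i}=(\frac{\partial}{\partial\phi_{i1}},\dots,\frac{\partial}{\partial\phi_{iN}})^T$, similarly for $Q_i$. *)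

From HB Require Import structures.
From mathcomp Require Import all_boot all_order all_algebra.
From mathcomp Require Import all_classical all_reals all_analysis.
Set Implicit Arguments. Unset Strict Implicit. Unset Printing Implicit Defensive.
Import Order.TTheory GRing.Theory Num.Theory.
Local Open Scope ring_scope.

Section Defs.
Variables (R : realType) (N : nat).

(* A point of R^{6N}: phi_{ij} = z.1 i j, psi_{ij} = z.2 i j,
   with i : 'I_3 (i = 1,2,3 is ordinal 0,1,2) and j : 'I_N. *)
Definition state := (('I_3 -> 'I_N -> R) * ('I_3 -> 'I_N -> R))%type.

Definition i1 : 'I_3 := Ordinal (isT : (0 < 3)%N).
Definition i2 : 'I_3 := Ordinal (isT : (1 < 3)%N).
Definition i3 : 'I_3 := Ordinal (isT : (2 < 3)%N).

Definition Pv (z : state) (i : 'I_3) : 'cV[R]_N := \col_j z.1 i j.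
Definition Qv (z : state) (i : 'I_3) : 'cV[R]_N := \col_j z.2 i j.

Definition inner (u v : 'cV[R]_N) : R := (u^T *m v) ord0 ord0.

Definition diagM (d : 'I_N -> R) : 'M[R]_N := diag_mx (\row_j d j).

Definition Uentry (q r lam : R) (i k : 'I_3) : R :=
  match nat_of_ord i, nat_of_ord k with
  | 0, 0 => - 2 * lam
  | 0, 1 => Num.sqrt 2 * q
  | 1, 0 => Num.sqrt 2 * r
  | 1, 2 => Num.sqrt 2 * q
  | 2, 1 => Num.sqrt 2 * r
  | 2, 2 => 2 * lam
  | _, _ => 0
  end.
Definition Umat (q r lam : R) : 'M[R]_3 := \matrix_(i, k) Uentry q r lam i k.

Variables (lam mu : 'I_N -> R).
Let A := diagM lam.
Let B := diagM mu.

Definition ipAB (k : nat) (z : state) (a b : 'I_3) : R :=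
  inner ((A ^+ k) *m Pv z a) (B *m Qv z b).

Definition Fint (m : nat) (z : state) : R :=
  if m == 1%N then - 8 * (ipAB 0 z i1 i1 - ipAB 0 z i3 i3)
  else
    4 * \sum_(1 <= i < m)
        ((ipAB i.-1 z i1 i1 - ipAB i.-1 z i3 i3)
           * (ipAB (m - i).-1 z i1 i1 - ipAB (m - i).-1 z i3 i3)
         + 2 * (ipAB i.-1 z i1 i2 + ipAB i.-1 z i2 i3)
             * (ipAB (m - i).-1 z i2 i1 + ipAB (m - i).-1 z i3 i2))
    - 8 * (ipAB m.-1 z i1 i1 - ipAB m.-1 z i3 i3).

Definition Fbar (j : 'I_N) (z : state) : R := \sum_(i < 3) z.1 i j * z.2 i j.

Definition qt (z : state) : R :=
  Num.sqrt 2 * (inner (Pv z i1) (B *m Qv z i2) + inner (Pv z i2) (B *m Qv z i3)).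
Definition rt (z : state) : R :=
  Num.sqrt 2 * (inner (Pv z i2) (B *m Qv z i1) + inner (Pv z i3) (B *m Qv z i2)).

Definition phicol (z : state) (j : 'I_N) : 'cV[R]_3 := \col_i z.1 i j.
Definition psicol (z : state) (j : 'I_N) : 'cV[R]_3 := \col_i z.2 i j.

Definition is_solution (sol : R -> state) : Prop :=
  forall (x : R) (i : 'I_3) (j : 'I_N),
    derivable (fun t => (sol t).1 i j) x 1 /\
    derivable (fun t => (sol t).2 i j) x 1 /\
    derive1 (fun t => (sol t).1 i j) x
      = (Umat (qt (sol x)) (rt (sol x)) (lam j) *m phicol (sol x) j) i ord0 /\
    derive1 (fun t => (sol t).2 i j) x
      = ((- (Umat (qt (sol x)) (rt (sol x)) (lam j))^T) *m psicol (sol x) j) i ord0.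

Definition integral_of_motion (F : state -> R) : Prop :=
  forall sol : R -> state, is_solution sol -> forall x y : R, F (sol x) = F (sol y).

Definition upd_phi (z : state) (i : 'I_3) (j : 'I_N) (t : R) : state :=
  (fun a b => if (a == i) && (b == j) then t else z.1 a b, z.2).
Definition upd_psi (z : state) (i : 'I_3) (j : 'I_N) (t : R) : state :=
  (z.1, fun a b => if (a == i) && (b == j) then t else z.2 a b).

Definition dP (F : state -> R) (z : state) (i : 'I_3) : 'cV[R]_N :=
  \col_j derive1 (fun t => F (upd_phi z i j t)) (z.1 i j).
Definition dQ (F : state -> R) (z : state) (i : 'I_3) : 'cV[R]_N :=
  \col_j derive1 (fun t => F (upd_psi z i j t)) (z.2 i j).

Definition Binv : 'M[R]_N := diagM (fun j => (mu j)^-1).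

Definition pbracket (F G : state -> R) (z : state) : R :=
  \sum_(i < 3) (inner (dQ F z i) (Binv *m dP G z i)
                - inner (dP F z i) (Binv *m dQ G z i)).

End Defs.

(* The functions <A^k P_a, B Q_b> close under the Poisson bracket into a loop
   algebra, {<A^k P_a, B Q_b>, <A^l P_c, B Q_d>} = d_bc <A^(k+l) P_a, B Q_d>
   - d_ad <A^(k+l) P_c, B Q_b>, which is checked on the coordinates with the
   Leibniz rule.  The combinations u_k, v_k, w_k occurring in F_m therefore
   satisfy {u_k, v_l} = v_(k+l), {u_k, w_l} = -w_(k+l), {v_k, w_l} = u_(k+l),
   and F_(n+1) = 4 sum_(i+j=n-1) (u_i u_j + 2 v_i w_j) - 8 u_n.
   Writing the quadratic part with the invariant pairing of X_k = (u_k, v_k, w_k),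
   the bracket of two quadratic parts is a sum of determinants
   det(X_(i+a), X_j, X_b) over i + j = n, a + b = m, which cancels because the
   determinant is totally antisymmetric; the cross terms with u_n cancel after
   reindexing.  The spatial system is the Hamiltonian flow of
   H = 2 u_1 - 2 v_0 w_0 = u_0^2 - F_2 / 4, so every F_m is conserved, and each
   Fbar_j commutes with all the <A^k P_a, B Q_b>. *)

From HB Require Import structures.
From mathcomp Require Import all_boot all_order all_algebra.
From mathcomp Require Import all_classical all_reals all_analysis.
From mathcomp Require Import ring zify.
Import Order.TTheory GRing.Theory Num.Theory.
Local Open Scope ring_scope.

Section AntisymmetricSums.
Variable R : numDomainType.
Implicit Types (n m : nat).

Lemma sum_nat_rev n (f : nat -> R) :
  \sum_(0 <= i < n.+1) f i = \sum_(0 <= i < n.+1) f (n - i)%N.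
Proof. by rewrite big_nat_rev; apply: eq_big_nat => i _; rewrite add0n subSS. Qed.

Lemma sum_antisym_rev n (g : nat -> nat -> R) :
  (forall a b, g a b = - g b a) -> \sum_(0 <= i < n.+1) g (n - i)%N i = 0.
Proof.
move=> gN; set S := (X in X = 0).
have SN : S = - S.
  rewrite {1}/S sum_nat_rev -sumrN; apply: eq_big_nat => i /andP[_ lti].
  by rewrite gN subKn.
by apply/eqP; move/eqP: SN; rewrite -addr_eq0 -mulr2n mulrn_eq0.
Qed.

(* The terms are indexed by the triples (p, q, r) with p + q + r = n + m, q <= n
   and r <= m; summing first over q and completing to q <= n + m - r (a sum that
   vanishes by antisymmetry in p, q) leaves the triples with q > n, whose sums
   over r vanish by antisymmetry in p, r. *)
Lemma sum_antisym_triangle n m (D : nat -> nat -> nat -> R) :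
  (forall p q r, D p q r = - D q p r) -> (forall p q r, D p q r = - D r q p) ->
  \sum_(0 <= i < n.+1) \sum_(0 <= a < m.+1) D (i + a)%N (n - i)%N (m - a)%N = 0.
Proof.
move=> Dpq Dpr; set s := (n + m)%N.
have -> : \sum_(0 <= i < n.+1) \sum_(0 <= a < m.+1) D (i + a)%N (n - i)%N (m - a)%N
        = \sum_(0 <= r < m.+1) \sum_(0 <= q < n.+1) D (s - r - q)%N q r.
  rewrite exchange_big sum_nat_rev; apply: eq_big_nat => r /andP[_ ltr].
  rewrite sum_nat_rev; apply: eq_big_nat => q /andP[_ ltq].
  by congr D; lia.
have split_q r : (0 <= r < m.+1)%N -> \sum_(0 <= q < n.+1) D (s - r - q)%N q r
    = - \sum_(n.+1 <= q < s.+1 | (q < (s - r).+1)%N) D (s - r - q)%N q r.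
  move=> /andP[_ ltr]; transitivity (- \sum_(n.+1 <= q < (s - r).+1) D (s - r - q)%N q r).
    apply/eqP; rewrite -addr_eq0 -big_cat_nat; [|lia|lia].
    apply/eqP; exact: (@sum_antisym_rev (s - r) (fun a b => D a b r)).
  by congr (- _); apply: big_nat_widen; lia.
rewrite (eq_big_nat _ _ split_q) sumrN (exchange_big_dep_nat xpredT) //=.
rewrite big1_seq ?oppr0 // => q /andP[_ /[!mem_index_iota] /andP[ltnq ltqs]].
transitivity (\sum_(0 <= r < (s - q).+1) D (s - r - q)%N q r).
  rewrite [RHS](big_nat_widen _ _ m.+1); last by lia.
  by apply: eq_bigl => r /=; apply/idP/idP; lia.
rewrite -[RHS](@sum_antisym_rev (s - q) (fun a b => D a q b)) => [|a b]; last exact: Dpr.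
by apply: eq_big_nat => r _; congr D; lia.
Qed.

Lemma sum_antisym_triangle4 n m (D : nat -> nat -> nat -> R) :
  (forall p q r, D p q r = - D q p r) -> (forall p q r, D p q r = - D r q p) ->
  \sum_(0 <= i < n.+1) \sum_(0 <= a < m.+1)
    (D (i + a)%N (n - i)%N (m - a)%N + D (i + (m - a))%N (n - i)%N a
     + D (n - i + a)%N i (m - a)%N + D (n - i + (m - a))%N i a) = 0.
Proof.
move=> Dpq Dpr; have T := sum_antisym_triangle n m D Dpq Dpr.
under eq_bigr do rewrite !big_split /=; rewrite !big_split /= T.
have -> : \sum_(0 <= i < n.+1) \sum_(0 <= a < m.+1) D (i + (m - a))%N (n - i)%N a = 0.
  rewrite -[RHS]T; apply: eq_bigr => i _; rewrite sum_nat_rev.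
  by apply: eq_big_nat => a /andP[_ lta]; rewrite subKn.
have -> : \sum_(0 <= i < n.+1) \sum_(0 <= a < m.+1) D (n - i + a)%N i (m - a)%N = 0.
  rewrite -[RHS]T sum_nat_rev.
  by apply: eq_big_nat => i /andP[_ lti]; rewrite subKn.
have -> : \sum_(0 <= i < n.+1) \sum_(0 <= a < m.+1) D (n - i + (m - a))%N i a = 0.
  rewrite -[RHS]T sum_nat_rev; apply: eq_big_nat => i /andP[_ lti].
  rewrite subKn // sum_nat_rev; apply: eq_big_nat => a /andP[_ lta].
  by rewrite subKn.
by rewrite !addr0.
Qed.

Lemma sum_convolution_shift k l (V W : nat -> R) :
  \sum_(0 <= i < k) (V i * W (k - i.+1 + l)%N - W (k - i.+1)%N * V (i + l)%N) =
  \sum_(0 <= i < k) V i * W (k + l - i.+1)%N + \sum_(0 <= i < l) V i * W (k + l - i.+1)%N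
  - \sum_(0 <= i < k + l) V i * W (k + l - i.+1)%N.
Proof.
rewrite sumrB (big_cat_nat (n := l) (m := 0) (p := k + l)) ?leq_addl //=.
have -> : \sum_(l <= i < k + l) V i * W (k + l - i.+1)%N
          = \sum_(0 <= i < k) W (k - i.+1)%N * V (i + l)%N.
  rewrite -{1}(add0n l) big_addn addnK.
  by apply: eq_big_nat => i _; rewrite mulrC; congr (W _ * _); lia.
have -> : \sum_(0 <= i < k) V i * W (k - i.+1 + l)%N
          = \sum_(0 <= i < k) V i * W (k + l - i.+1)%N.
  by apply: eq_big_nat => i /andP[_ lti]; congr (_ * W _); lia.
ring.
Qed.

End AntisymmetricSums.

Lemma sum_delta (R : pzSemiRingType) (T : finType) (a : T) (f : T -> R) :
  \sum_t (a == t)%:R * f t = f a.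
Proof.
rewrite (bigD1 a) //= eqxx mul1r big1 ?addr0 // => t ta.
by rewrite eq_sym (negbTE ta) mul0r.
Qed.

Lemma sum_ord3 (V : nmodType) (f : 'I_3 -> V) : \sum_(k < 3) f k = f i1 + f i2 + f i3.
Proof.
rewrite !big_ord_recl big_ord0 addr0 !addrA.
by congr (f _ + f _ + f _); apply: val_inj.
Qed.

Lemma ord3P (i : 'I_3) : [\/ i = i1, i = i2 | i = i3].
Proof.
by case: i => [[|[|[|//]]] lti]; [constructor 1|constructor 2|constructor 3]; apply: val_inj.
Qed.

Section PhaseSpace.
Variables (R : realType) (N : nat).
Local Notation state := (state R N).
Local Notation var_index := (bool * ('I_3 * 'I_N))%type.
Implicit Types (F G : state -> R) (z : state) (e : var_index).

Definition var e z : R := let: (s, (i, j)) := e in if s then z.2 i j else z.1 i j.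

(* Keep [var] and [ipAB] folded: instance search recognizes them only in that
   form, and unfolding [ipAB] exposes matrix products. *)
Arguments var : simpl never.
Typeclasses Opaque var ipAB.

Definition upd e z (t : R) : state :=
  let: (s, (i, j)) := e in if s then upd_psi z i j t else upd_phi z i j t.

Definition partial e F z : R := derive1 (fun t => F (upd e z t)) (var e z).

Lemma var_upd e' e z t : var e' (upd e z t) = if e' == e then t else var e' z.
Proof. by case: e' e => [[] [a b]] [[] [i j]]; rewrite /= ?xpair_eqE. Qed.

Lemma upd_var e z : upd e z (var e z) = z.
Proof.
case: z e => z1 z2 [[] [i j]] /=; congr pair; apply/funext => a; apply/funext => b;
  by case: eqP => [->|//]; case: eqP => [->|].
Qed.

(* Contains every polynomial in the coordinates; side conditions [chain_rule F]
   are discharged by instance search. *)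
Class chain_rule F : Prop := chain_ruleP : forall (sol : R -> state) (x : R),
  (forall e, derivable (fun t => var e (sol t)) x 1) ->
  is_derive x 1 (fun t => F (sol t))
    (\sum_e partial e F (sol x) * derive1 (fun t => var e (sol t)) x).

Lemma derivable_var_upd e' e z t : derivable (fun t => var e' (upd e z t)) t 1.
Proof.
have -> : (fun t => var e' (upd e z t)) = if e' == e then id else cst (var e' z).
  by apply/funext => s; rewrite var_upd; case: eqP.
by case: eqP => _; [exact: derivable_id | exact: derivable_cst].
Qed.

Lemma derivable_partial F e z `{chain_rule F} :
  derivable (fun t => F (upd e z t)) (var e z) 1.
Proof.
by have [] := chain_ruleP (upd e z) (var e z) (fun e' => derivable_var_upd e' e z _).
Qed.

Section PartialRules.
Variables (F G : state -> R) (e : var_index) (z : state).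
Context `{chain_rule F} `{chain_rule G}.

Lemma partialD : partial e (fun z => F z + G z) z = partial e F z + partial e G z.
Proof. by rewrite /partial !derive1E deriveD //; exact: derivable_partial. Qed.

Lemma partialB : partial e (fun z => F z - G z) z = partial e F z - partial e G z.
Proof. by rewrite /partial !derive1E deriveB //; exact: derivable_partial. Qed.

Lemma partialM :
  partial e (fun z => F z * G z) z = partial e F z * G z + F z * partial e G z.
Proof.
have dF := derivable_partial F e z; have dG := derivable_partial G e z.
rewrite /partial !derive1E deriveM; [|exact: dF|exact: dG].
by rewrite (upd_var e z) addrC mulrC.
Qed.

End PartialRules.

Lemma partial_cst a e z : partial e (fun _ => a) z = 0.
Proof. exact: derive1_cst. Qed.

Lemma partial_var e' e z : partial e (var e') z = (e' == e)%:R.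
Proof.
rewrite /partial; under eq_fun do rewrite var_upd.
by case: eqP => _; [exact: derive1_id | exact: derive1_cst].
Qed.

Global Instance chain_rule_cst a : chain_rule (fun _ => a).
Proof.
move=> sol x _; apply: is_derive_eq.
by symmetry; apply: big1 => e _; rewrite partial_cst mul0r.
Qed.

Global Instance chain_rule_var e' : chain_rule (var e').
Proof.
move=> sol x dsol; apply: is_derive_eq; first exact: derivableP.
by under eq_bigr do rewrite partial_var; rewrite sum_delta derive1E.
Qed.

Global Instance chain_ruleD F G `{chain_rule F} `{chain_rule G} :
  chain_rule (fun z => F z + G z).
Proof.
move=> sol x dsol.
apply: (is_derive_eq (is_deriveD (chain_ruleP sol x dsol) (chain_ruleP sol x dsol))).
by rewrite -big_split; apply: eq_bigr => e _ /=; rewrite partialD mulrDl.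
Qed.

Global Instance chain_ruleM F G `{chain_rule F} `{chain_rule G} :
  chain_rule (fun z => F z * G z).
Proof.
move=> sol x dsol.
apply: (is_derive_eq (is_deriveM (chain_ruleP sol x dsol) (chain_ruleP sol x dsol))).
rewrite /GRing.scale /= !mulr_sumr -big_split; apply: eq_bigr => e _ /=.
by rewrite partialM; ring.
Qed.

Global Instance chain_ruleB F G `{chain_rule F} `{chain_rule G} :
  chain_rule (fun z => F z - G z).
Proof.
move=> sol x dsol.
apply: (is_derive_eq (is_deriveB (chain_ruleP sol x dsol) (chain_ruleP sol x dsol))).
by rewrite -sumrB; apply: eq_bigr => e _ /=; rewrite partialB mulrBl.
Qed.

Global Instance chain_rule_sum (I : Type) (r : seq I) (P : pred I)
  (F : I -> state -> R) `{forall i, chain_rule (F i)} :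
  chain_rule (fun z => \sum_(i <- r | P i) F i z).
Proof.
elim: r => [|a r' IH].
  by under eq_fun do rewrite big_nil; exact: chain_rule_cst.
under eq_fun do rewrite big_cons; case: (P a) => //; exact: chain_ruleD.
Qed.

Lemma partial_sum (I : Type) (r : seq I) (P : pred I)
  (F : I -> state -> R) `{forall i, chain_rule (F i)} e z :
  partial e (fun z => \sum_(i <- r | P i) F i z) z = \sum_(i <- r | P i) partial e (F i) z.
Proof.
elim: r => [|a r' IH]; first by under eq_fun do rewrite big_nil; rewrite big_nil partial_cst.
under eq_fun do rewrite big_cons; rewrite big_cons; case: (P a) => //.
by rewrite partialD IH.
Qed.

Section PoissonBracket.
Variable mu : 'I_N -> R.

Definition bracket F G z : R :=
  \sum_(p : 'I_3 * 'I_N) (mu p.2)^-1 *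
    (partial (true, p) F z * partial (false, p) G z
     - partial (false, p) F z * partial (true, p) G z).

Lemma pbracketE F G z : pbracket mu F G z = bracket F G z.
Proof.
rewrite /pbracket; under eq_bigr do rewrite /inner /Binv /diagM !mul_diag_mx !mxE -sumrB.
rewrite pair_bigA; apply: eq_bigr => -[i j] _; by rewrite !mxE /partial /=; ring.
Qed.

Lemma bracketC F G z : bracket G F z = - bracket F G z.
Proof. by rewrite -sumrN; apply: eq_bigr => p _; ring. Qed.

Section BracketLeft.
Variables (F1 F2 G : state -> R) (z : state).
Context `{chain_rule F1} `{chain_rule F2}.

Lemma bracketDl : bracket (fun z => F1 z + F2 z) G z = bracket F1 G z + bracket F2 G z.
Proof. by rewrite -big_split; apply: eq_bigr => p _ /=; rewrite !partialD; ring. Qed.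

Lemma bracketBl : bracket (fun z => F1 z - F2 z) G z = bracket F1 G z - bracket F2 G z.
Proof. by rewrite -sumrB; apply: eq_bigr => p _ /=; rewrite !partialB; ring. Qed.

Lemma bracketMl :
  bracket (fun z => F1 z * F2 z) G z = F1 z * bracket F2 G z + F2 z * bracket F1 G z.
Proof.
by rewrite !mulr_sumr -big_split; apply: eq_bigr => p _ /=; rewrite !partialM; ring.
Qed.

End BracketLeft.

Lemma bracket_cstl a G z : bracket (fun _ => a) G z = 0.
Proof. by apply: big1 => p _; rewrite !partial_cst; ring. Qed.

Lemma bracketZl a F G z `{chain_rule F} :
  bracket (fun z => a * F z) G z = a * bracket F G z.
Proof. by rewrite bracketMl bracket_cstl mulr0 addr0. Qed.

Lemma bracket_suml (I : Type) (r : seq I) (P : pred I) (F : I -> state -> R)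
  `{forall i, chain_rule (F i)} G z :
  bracket (fun z => \sum_(i <- r | P i) F i z) G z = \sum_(i <- r | P i) bracket (F i) G z.
Proof.
rewrite /bracket exchange_big; apply: eq_bigr => p _ /=.
by rewrite !partial_sum !mulr_suml -sumrB mulr_sumr.
Qed.

Section BracketRight.
Variables (G F1 F2 : state -> R) (z : state).
Context `{chain_rule F1} `{chain_rule F2}.

Lemma bracketDr : bracket G (fun z => F1 z + F2 z) z = bracket G F1 z + bracket G F2 z.
Proof. by rewrite bracketC bracketDl opprD -!bracketC. Qed.

Lemma bracketBr : bracket G (fun z => F1 z - F2 z) z = bracket G F1 z - bracket G F2 z.
Proof. by rewrite bracketC bracketBl opprB addrC -!bracketC. Qed.

Lemma bracketMr :
  bracket G (fun z => F1 z * F2 z) z = F1 z * bracket G F2 z + F2 z * bracket G F1 z.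
Proof. by rewrite bracketC bracketMl opprD -!mulrN -!bracketC. Qed.

End BracketRight.

Lemma bracket_cstr a G z : bracket G (fun _ => a) z = 0.
Proof. by rewrite bracketC bracket_cstl oppr0. Qed.

Lemma bracketZr a G F z `{chain_rule F} :
  bracket G (fun z => a * F z) z = a * bracket G F z.
Proof. by rewrite bracketMr bracket_cstr mulr0 addr0. Qed.

Lemma bracket_sumr (I : Type) (r : seq I) (P : pred I) (F : I -> state -> R)
  `{forall i, chain_rule (F i)} G z :
  bracket G (fun z => \sum_(i <- r | P i) F i z) z = \sum_(i <- r | P i) bracket G (F i) z.
Proof.
by rewrite bracketC bracket_suml -sumrN; apply: eq_bigr => i _; rewrite -bracketC.
Qed.

Lemma bracket_psil p G z :
  bracket (var (true, p)) G z = (mu p.2)^-1 * partial (false, p) G z.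
Proof.
rewrite /bracket (bigD1 p) //= big1 => [|q qp]; rewrite !partial_var !xpair_eqE /=.
  by rewrite eqxx /=; ring.
by rewrite eq_sym (negbTE qp) /=; ring.
Qed.

Lemma bracket_phil p G z :
  bracket (var (false, p)) G z = - ((mu p.2)^-1 * partial (true, p) G z).
Proof.
rewrite /bracket (bigD1 p) //= big1 => [|q qp]; rewrite !partial_var !xpair_eqE /=.
  by rewrite eqxx /=; ring.
by rewrite eq_sym (negbTE qp) /=; ring.
Qed.

Lemma is_derive_hamiltonian_flow H F `{chain_rule F} (sol : R -> state) x :
  (forall e, derivable (fun t => var e (sol t)) x 1) ->
  (forall e, derive1 (fun t => var e (sol t)) x = bracket (var e) H (sol x)) ->
  is_derive x 1 (fun t => F (sol t)) (bracket F H (sol x)).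
Proof.
move=> dsol velocity; apply: (is_derive_eq (chain_ruleP sol x dsol)).
under eq_bigr do rewrite velocity.
transitivity (\sum_s \sum_p partial (s, p) F (sol x) * bracket (var (s, p)) H (sol x)).
  by rewrite pair_bigA; apply: eq_bigr => -[s p].
rewrite big_bool /= -big_split [RHS]/bracket; apply: eq_bigr => p _ /=.
by rewrite bracket_psil bracket_phil; ring.
Qed.

End PoissonBracket.

Section IntegralsOfMotion.
Variables (lam mu : 'I_N -> R).
Hypothesis mu_neq0 : forall j, mu j != 0.
Local Notation phi i j := (var (false, (i, j))).
Local Notation psi i j := (var (true, (i, j))).
Local Notation ip k a b := (fun z => ipAB lam mu k z a b).
Local Notation "{ F , G }" := (bracket mu F G).
Implicit Types (k l : nat) (a b c d i : 'I_3) (j : 'I_N).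

Lemma mul_diag_mx_pow k (v : 'cV[R]_N) j :
  ((diagM lam ^+ k) *m v) j 0 = lam j ^+ k * v j 0.
Proof.
elim: k => [|k IH]; first by rewrite expr0 mul1mx expr0 mul1r.
by rewrite exprS -mulmxE -mulmxA mul_diag_mx mxE IH mxE exprS mulrA.
Qed.

Lemma ipABE k z a b :
  ipAB lam mu k z a b = \sum_j lam j ^+ k * mu j * (phi a j z * psi b j z).
Proof.
rewrite /ipAB /inner mxE; apply: eq_bigr => j _.
by rewrite mxE mul_diag_mx_pow mul_diag_mx !mxE /var /=; ring.
Qed.

Lemma ipAB_sum k a b :
  ip k a b = fun z => \sum_j lam j ^+ k * mu j * (phi a j z * psi b j z).
Proof. by apply/funext => z; rewrite ipABE. Qed.

Global Instance chain_rule_ipAB k a b : chain_rule (ip k a b).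
Proof. rewrite ipAB_sum; exact: _. Qed.

Lemma partial_phi_ipAB k a b i j z :
  partial (false, (i, j)) (ip k a b) z = (a == i)%:R * (lam j ^+ k * mu j * psi b j z).
Proof.
rewrite ipAB_sum partial_sum (bigD1 j) //= big1 => [|j' j'j];
  rewrite !partialM !partial_cst !partial_var !xpair_eqE.
  by rewrite !eqxx /= !andbT; ring.
by rewrite (negbTE j'j) !andbF /=; ring.
Qed.

Lemma partial_psi_ipAB k a b i j z :
  partial (true, (i, j)) (ip k a b) z = (b == i)%:R * (lam j ^+ k * mu j * phi a j z).
Proof.
rewrite ipAB_sum partial_sum (bigD1 j) //= big1 => [|j' j'j];
  rewrite !partialM !partial_cst !partial_var !xpair_eqE.
  by rewrite !eqxx /= !andbT; ring.
by rewrite (negbTE j'j) !andbF /=; ring.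
Qed.

Lemma bracket_phi_ipAB k a b i j z :
  {phi i j, ip k a b} z = - ((b == i)%:R * (lam j ^+ k * phi a j z)).
Proof. by rewrite bracket_phil partial_psi_ipAB /=; field. Qed.

Lemma bracket_psi_ipAB k a b i j z :
  {psi i j, ip k a b} z = (a == i)%:R * (lam j ^+ k * psi b j z).
Proof. by rewrite bracket_psil partial_phi_ipAB /=; field. Qed.

Lemma bracket_ipAB k l a b c d z :
  {ip k a b, ip l c d} z =
  (b == c)%:R * ipAB lam mu (k + l) z a d - (a == d)%:R * ipAB lam mu (k + l) z c b.
Proof.
rewrite [ip l c d]ipAB_sum bracket_sumr !ipABE !mulr_sumr -sumrB.
apply: eq_bigr => j _; rewrite bracketZr bracketMr !(bracketC mu _ (ip k a b)).
by rewrite bracket_phi_ipAB bracket_psi_ipAB exprD; ring.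
Qed.

Lemma bracket_ipAB_Fbar k a b j z : {ip k a b, Fbar j} z = 0.
Proof.
have -> : Fbar j = fun z => \sum_i phi i j z * psi i j z by [].
rewrite bracket_sumr.
under eq_bigr do
  rewrite bracketMr !(bracketC mu _ (ip k a b)) bracket_phi_ipAB bracket_psi_ipAB.
rewrite (eq_bigr (fun i => (b == i)%:R * (psi i j z * (lam j ^+ k * phi a j z))
  - (a == i)%:R * (phi i j z * (lam j ^+ k * psi b j z)))) => [|i _]; last by ring.
by rewrite sumrB !sum_delta; ring.
Qed.

Definition u k z := ipAB lam mu k z i1 i1 - ipAB lam mu k z i3 i3.
Definition v k z := ipAB lam mu k z i1 i2 + ipAB lam mu k z i2 i3.
Definition w k z := ipAB lam mu k z i2 i1 + ipAB lam mu k z i3 i2.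
Typeclasses Opaque u v w.

Global Instance chain_rule_u k : chain_rule (u k). Proof. exact: chain_ruleB. Qed.
Global Instance chain_rule_v k : chain_rule (v k). Proof. exact: chain_ruleD. Qed.
Global Instance chain_rule_w k : chain_rule (w k). Proof. exact: chain_ruleD. Qed.

Lemma bracket_uu k l z : {u k, u l} z = 0.
Proof. by rewrite /u bracketBl !bracketBr !bracket_ipAB /=; ring. Qed.

Lemma bracket_vv k l z : {v k, v l} z = 0.
Proof. by rewrite /v bracketDl !bracketDr !bracket_ipAB /=; ring. Qed.

Lemma bracket_ww k l z : {w k, w l} z = 0.
Proof. by rewrite /w bracketDl !bracketDr !bracket_ipAB /=; ring. Qed.

Lemma bracket_uv k l z : {u k, v l} z = v (k + l) z.
Proof. by rewrite /u /v bracketBl !bracketDr !bracket_ipAB /=; ring. Qed.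

Lemma bracket_uw k l z : {u k, w l} z = - w (k + l) z.
Proof. by rewrite /u /w bracketBl !bracketDr !bracket_ipAB /=; ring. Qed.

Lemma bracket_vw k l z : {v k, w l} z = u (k + l) z.
Proof. by rewrite /u /v /w bracketDl !bracketDr !bracket_ipAB /=; ring. Qed.

Lemma bracket_vu k l z : {v k, u l} z = - v (k + l) z.
Proof. by rewrite bracketC bracket_uv addnC. Qed.

Lemma bracket_wu k l z : {w k, u l} z = w (k + l) z.
Proof. by rewrite bracketC bracket_uw opprK addnC. Qed.

Lemma bracket_wv k l z : {w k, v l} z = - u (k + l) z.
Proof. by rewrite bracketC bracket_vw addnC. Qed.

Definition uvw_pairing m n z := u m z * u n z + v m z * w n z + w m z * v n z.

Definition uvw_det p q r z :=
  u p z * (v q z * w r z - w q z * v r z) - v p z * (u q z * w r z - w q z * u r z)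
  + w p z * (u q z * v r z - v q z * u r z).

Lemma bracket_uvw_pairing m n p q z :
  {uvw_pairing m n, uvw_pairing p q} z =
  - (uvw_det (m + p) n q z + uvw_det (m + q) n p z
     + uvw_det (n + p) m q z + uvw_det (n + q) m p z).
Proof.
rewrite /uvw_pairing !bracketDl !bracketMl !bracketDr !bracketMr.
rewrite !(bracket_uu, bracket_vv, bracket_ww, bracket_uv, bracket_uw, bracket_vw,
  bracket_vu, bracket_wu, bracket_wv).
rewrite /uvw_det; ring.
Qed.

Definition Fquad_term m n z := u m z * u n z + 2 * (v m z * w n z).

Definition Fquad n z := \sum_(0 <= i < n) Fquad_term i (n - i.+1) z.
Typeclasses Opaque uvw_pairing Fquad_term Fquad.

(* Eta-expanded, as the summands [F i] of big sums reach instance search. *)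
Global Instance chain_rule_uvw_pairing m n : chain_rule (fun z => uvw_pairing m n z).
Proof. rewrite /uvw_pairing; exact: _. Qed.

Global Instance chain_rule_Fquad_term m n : chain_rule (fun z => Fquad_term m n z).
Proof. rewrite /Fquad_term; exact: _. Qed.

Global Instance chain_rule_Fquad n : chain_rule (Fquad n).
Proof. rewrite /Fquad; exact: _. Qed.

Lemma Fint_succ n : Fint lam mu n.+1 = fun z => 4 * Fquad n z - 8 * u n z.
Proof.
apply/funext => z; rewrite /Fint /Fquad /Fquad_term /u /v /w.
case: n => [|n] /=; first by rewrite big_geq //; ring.
congr (4 * _ - _); rewrite big_add1 /=; apply: eq_big_nat => i _.
have -> : ((n.+2 - i.+1).-1 = n.+1 - i.+1)%N by lia.
ring.
Qed.

Lemma Fquad_pairing n :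
  Fquad n.+1 = fun z => \sum_(0 <= i < n.+1) uvw_pairing i (n - i) z.
Proof.
apply/funext => z; rewrite /Fquad /Fquad_term /uvw_pairing.
have rev : \sum_(0 <= i < n.+1) w i z * v (n - i)%N z
         = \sum_(0 <= i < n.+1) v i z * w (n - i)%N z.
  by rewrite sum_nat_rev; apply: eq_big_nat => i /andP[_ lti]; rewrite subKn // mulrC.
by rewrite !big_split /= rev -mulr_sumr; ring.
Qed.

Lemma Fquad0 : Fquad 0 = fun _ => 0.
Proof. by apply/funext => z; rewrite /Fquad big_geq. Qed.

Lemma bracket_Fquad k l z : {Fquad k, Fquad l} z = 0.
Proof.
case: k => [|n]; first by rewrite Fquad0 bracket_cstl.
case: l => [|m]; first by rewrite Fquad0 bracket_cstr.
rewrite !Fquad_pairing bracket_suml.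
under eq_bigr do rewrite bracket_sumr.
under eq_bigr do under eq_bigr do rewrite bracket_uvw_pairing.
under eq_bigr do rewrite sumrN; rewrite sumrN.
rewrite (@sum_antisym_triangle4 _ n m (fun p q r => uvw_det p q r z)) ?oppr0 //.
  by move=> p q r; rewrite /uvw_det; ring.
by move=> p q r; rewrite /uvw_det; ring.
Qed.

Lemma bracket_Fquad_term_u m n l z :
  {Fquad_term m n, u l} z = 2 * (v m z * w (n + l) z - w n z * v (m + l) z).
Proof.
rewrite /Fquad_term bracketDl bracketZl !bracketMl.
by rewrite !bracket_uu bracket_vu bracket_wu; ring.
Qed.

Lemma bracket_Fquad_u k l z :
  {Fquad k, u l} z =
  2 * \sum_(0 <= i < k) (v i z * w (k - i.+1 + l)%N z - w (k - i.+1)%N z * v (i + l)%N z).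
Proof. by rewrite bracket_suml mulr_sumr; apply: eq_bigr => i _; rewrite bracket_Fquad_term_u. Qed.

Lemma bracket_Fint k l z : {Fint lam mu k.+1, Fint lam mu l.+1} z = 0.
Proof.
rewrite !Fint_succ bracketBl !bracketZl !bracketBr !bracketZr bracket_Fquad bracket_uu.
rewrite (bracketC mu (Fquad l)) !bracket_Fquad_u.
rewrite !(sum_convolution_shift _ _ _ (fun n => v n z) (fun n => w n z)) (addnC l k); ring.
Qed.

Lemma bracket_Fint_u0 k z : {Fint lam mu k.+1, u 0} z = 0.
Proof.
rewrite Fint_succ bracketBl !bracketZl bracket_uu bracket_Fquad_u big1 => [|i _]; first by ring.
by rewrite !addn0; ring.
Qed.

Lemma bracket_Fint_eq0_of_ipAB G z :
  (forall k a b, {ip k a b, G} z = 0) -> forall n, {Fint lam mu n.+1, G} z = 0.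
Proof.
move=> ipG n.
have uG k : {u k, G} z = 0 by rewrite /u bracketBl !ipG subrr.
have vG k : {v k, G} z = 0 by rewrite /v bracketDl !ipG addr0.
have wG k : {w k, G} z = 0 by rewrite /w bracketDl !ipG addr0.
rewrite Fint_succ bracketBl !bracketZl uG bracket_suml big1 ?mulr0 ?subrr // => i _.
by rewrite bracketDl bracketZl !bracketMl !uG vG wG; ring.
Qed.

Lemma bracket_Fint_Fbar n j z : {Fint lam mu n.+1, Fbar j} z = 0.
Proof. by apply: bracket_Fint_eq0_of_ipAB => k a b; exact: bracket_ipAB_Fbar. Qed.

Definition ham z := 2 * u 1 z - 2 * (v 0 z * w 0 z).

Lemma ham_Fint : ham = fun z => u 0 z * u 0 z - 4^-1 * Fint lam mu 2 z.
Proof.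
by apply/funext => z; rewrite Fint_succ /Fquad big_nat1 /Fquad_term /ham; field.
Qed.

Global Instance chain_rule_Fint n : chain_rule (Fint lam mu n.+1).
Proof. rewrite Fint_succ; exact: _. Qed.

Lemma bracket_Fint_ham n z : {Fint lam mu n.+1, ham} z = 0.
Proof.
rewrite ham_Fint bracketBr bracketZr bracketMr bracket_Fint_u0 bracket_Fint; ring.
Qed.

Lemma qtE z : qt mu z = Num.sqrt 2 * v 0 z.
Proof. by rewrite /qt /v /ipAB !expr0 !mul1mx. Qed.

Lemma rtE z : rt mu z = Num.sqrt 2 * w 0 z.
Proof. by rewrite /rt /w /ipAB !expr0 !mul1mx. Qed.

Lemma phi_velocity z i j :
  (Umat (qt mu z) (rt mu z) (lam j) *m phicol z j) i ord0 = {phi i j, ham} z.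
Proof.
have s2 : Num.sqrt 2 * Num.sqrt 2 = 2 :> R by rewrite -expr2 sqr_sqrtr ?ler0n.
rewrite mxE sum_ord3 !mxE qtE rtE /ham bracketBr !bracketZr bracketMr.
rewrite /u /v /w !bracketBr !bracketDr !bracket_phi_ipAB /var /=.
by case: (ord3P i) => ->; rewrite /Uentry /= !mulrA ?s2; ring.
Qed.

Lemma psi_velocity z i j :
  ((- (Umat (qt mu z) (rt mu z) (lam j))^T) *m psicol z j) i ord0 = {psi i j, ham} z.
Proof.
have s2 : Num.sqrt 2 * Num.sqrt 2 = 2 :> R by rewrite -expr2 sqr_sqrtr ?ler0n.
rewrite mxE sum_ord3 !mxE qtE rtE /ham bracketBr !bracketZr bracketMr.
rewrite /u /v /w !bracketBr !bracketDr !bracket_psi_ipAB /var /=.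
by case: (ord3P i) => ->; rewrite /Uentry /= !mulrA ?s2; ring.
Qed.

Lemma Fint_integral_of_motion n : integral_of_motion lam mu (Fint lam mu n.+1).
Proof.
move=> sol solP x y.
apply: (is_derive_0_is_cst (f := fun s => Fint lam mu n.+1 (sol s))) => t.
have dsol e : derivable (fun s => var e (sol s)) t 1.
  by case: e => [[] [i j]]; have [dphi [dpsi _]] := solP t i j.
apply: is_derive_eq (bracket_Fint_ham n (sol t)).
apply: (@is_derive_hamiltonian_flow mu ham _ _ sol t dsol) => -[[] [i j]];
  have [_ [_ [phiE psiE]]] := solP t i j.
- exact: etrans psiE (psi_velocity _ _ _).
- exact: etrans phiE (phi_velocity _ _ _).
Qed.

End IntegralsOfMotion.

End PhaseSpace.

Theorem theorem3p2 (R : realType) (N : nat) (lam mu : 'I_N -> R)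
  (hN : (1 <= N)%N)
  (hlam : injective lam)
  (hmu : forall j, mu j != 0) :
  (forall m : nat, (1 <= m)%N -> integral_of_motion lam mu (Fint lam mu m))
  /\ (forall k l : nat, (1 <= k)%N -> (1 <= l)%N ->
        forall z : state R N, pbracket mu (Fint lam mu k) (Fint lam mu l) z = 0)
  /\ (forall (m : nat) (j : 'I_N), (1 <= m)%N ->
        forall z : state R N, pbracket mu (Fint lam mu m) (Fbar j) z = 0).
Proof.
split; [|split].
- by move=> [//|m] _; exact: Fint_integral_of_motion.
- by move=> [//|k] [//|l] _ _ z; rewrite pbracketE bracket_Fint.
- by move=> [//|m] j _ z; rewrite pbracketE bracket_Fint_Fbar.
Qed.
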